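(* Let $P=(Q,I,M,\Delta)$ be a broadcast protocol, let $F\subseteq Q$, and let $S$ be the set of states returned by the saturation algorithm on input $P$. If $F\cap S\neq\emptyset$, then there exists a reconfigurable execution $\rho$ covering $F$ such that $\rho$ has at most $2|Q|$ nodes and length at most $2|Q|^2$.
   Context: A broadcast protocol is a tuple $P=(Q,I,M,\Delta)$ where $Q$ is a finite set of states, $I\subseteq Q$ is the set of initial states, $M$ is a finite message alphabet and $\Delta\subseteq Q\times\{!!m,\ ??m \mid m\in M\}\times Q$ is the transition relation ($!!m$ = broadcast of $m$, $??m$ = reception of $m$). Protocols are assumed complete for receptions: for every $q\in Q$ and $m\in M$ there is $q'$ with $(q,??m,q')\in\Delta$. A configuration is a finite undirected graph $\gamma=(V,E,L)$ with $E\subseteq V\times V$ symmetric and irreflexive and $L:V\to Q$; $L(\gamma)$ denotes the set $L(V)$ of labels occurring in $\gamma$; $\gamma$ is initial if $L(V)\subseteq I$. For $v\in V$, its neighbours are the $v'$ with $(v,v')\in E$. A reconfigurable step goes from $\gamma=(V,E,L)$ to $\gamma'=(V,E',L')$ (same node set, arbitrary new edge set $E'$) if there exist a node $v$ and a message $m$ with $(L(v),!!m,L'(v))\in\Delta$ and, for every $v'\neq v$: if $v'$ is a neighbour of $v$ in $E$ then $(L(v'),??m,L'(v'))\in\Delta$, otherwise $L'(v')=L(v')$; $v$ is then said to broadcast in this step. A reconfigurable execution is a sequence $\gamma_0,\dots,\gamma_r$ of configurations over a fixed node set with $\gamma_0$ initial and each $\gamma_i\to\gamma_{i+1}$ a reconfigurable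 step; its number of nodes is $|V|$, its length is $r$, and it covers $F$ if $L(\gamma_r)\cap F\neq\emptyset$. The saturation algorithm on input $P$: start with $S:=I$, $c:=|I|$; repeat: if there is $(q_1,!!m,q_2)\in\Delta$ with $q_1\in S$, $q_2\notin S$, add $q_2$ to $S$ and set $c:=c+1$; else if there are $(q_1,!!m,q_2)\in\Delta$ and $(q_1',??m,q_2')\in\Delta$ with $q_1,q_2,q_1'\in S$ and $q_2'\notin S$, add $q_2'$ to $S$ and set $c:=c+2$; else stop and return $S$ (choices among candidates are arbitrary). *)

From mathcomp Require Import all_boot.
Set Implicit Arguments. Unset Strict Implicit. Unset Printing Implicit Defensive.

Inductive action (M : Type) := Bcast of M | Recv of M.
Arguments Bcast {M}. Arguments Recv {M}.

Definition reception_complete (Q M : Type) (Delta : Q -> action M -> Q -> bool) :=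
  forall (q : Q) (m : M), exists q', Delta q (Recv m) q'.

Record config (Q : Type) (n : nat) := Config {
  edge : 'I_n -> 'I_n -> bool;
  lab  : 'I_n -> Q }.

Definition wf_config Q n (g : config Q n) :=
  (forall v v', edge g v v' = edge g v' v) /\ (forall v, edge g v v = false).

Definition initial_config (Q : finType) n (I : {set Q}) (g : config Q n) :=
  forall v, lab g v \in I.

(* Reconfigurable step: the new edge set of g' is arbitrary. *)
Definition rstep (Q M : Type) (Delta : Q -> action M -> Q -> bool) n
    (g g' : config Q n) :=
  exists (v : 'I_n) (m : M),
    Delta (lab g v) (Bcast m) (lab g' v) /\
    forall v', v' != v ->
      (edge g v v' -> Delta (lab g v') (Recv m) (lab g' v')) /\
      (~~ edge g v v' -> lab g' v' = lab g v').

Definition rexec (Q : finType) (M : Type) (I : {set Q})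
    (Delta : Q -> action M -> Q -> bool) n r (gs : nat -> config Q n) :=
  (forall i, i <= r -> wf_config (gs i)) /\
  initial_config I (gs 0) /\
  (forall i, i < r -> rstep Delta (gs i) (gs i.+1)).

Definition covers (Q : finType) n (g : config Q n) (F : {set Q}) :=
  exists v, lab g v \in F.

(* The saturation algorithm, modelled as a nondeterministic transition
   system on pairs (S, c). *)
Definition bcast_candidate (Q : finType) (M : Type)
    (Delta : Q -> action M -> Q -> bool) (S : {set Q}) (q2 : Q) :=
  exists q1 m, [/\ q1 \in S, q2 \notin S & Delta q1 (Bcast m) q2].

Definition recv_candidate (Q : finType) (M : Type)
    (Delta : Q -> action M -> Q -> bool) (S : {set Q}) (q2' : Q) :=
  exists q1 q2 q1' m, [/\ q1 \in S, q2 \in S, q1' \in S & q2' \notin S] /\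
                      Delta q1 (Bcast m) q2 /\ Delta q1' (Recv m) q2'.

Inductive sat_step (Q : finType) (M : Type) (Delta : Q -> action M -> Q -> bool) :
    {set Q} * nat -> {set Q} * nat -> Prop :=
  | sat_b S c q2 : bcast_candidate Delta S q2 ->
      sat_step Delta (S, c) (q2 |: S, c + 1)
  | sat_r S c q2' : (forall q, ~ bcast_candidate Delta S q) ->
      recv_candidate Delta S q2' ->
      sat_step Delta (S, c) (q2' |: S, c + 2).

Inductive sat_run (Q : finType) (M : Type) (Delta : Q -> action M -> Q -> bool) :
    {set Q} * nat -> {set Q} * nat -> Prop :=
  | sat_refl x : sat_run Delta x x
  | sat_trans x y z : sat_step Delta x y -> sat_run Delta y z -> sat_run Delta x z.

Definition sat_stopped (Q : finType) (M : Type)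
    (Delta : Q -> action M -> Q -> bool) (S : {set Q}) :=
  (forall q, ~ bcast_candidate Delta S q) /\ (forall q, ~ recv_candidate Delta S q).

Definition saturation_output (Q : finType) (M : Type) (I : {set Q})
    (Delta : Q -> action M -> Q -> bool) (S : {set Q}) :=
  exists c, sat_run Delta (I, #|I|) (S, c) /\ sat_stopped Delta S.

From mathcomp Require Import all_boot zify.
Set Implicit Arguments. Unset Strict Implicit. Unset Printing Implicit Defensive.

(* Every set S reached by the saturation algorithm is realised by a single
   execution on at most 2|S| nodes, in which every node broadcasts at most |S|
   times and whose final configuration exhibits every state of S.  A node can
   be duplicated at no cost in broadcasts per node: the copy receives whatever
   the original receives and repeats each of its broadcasts, to nobody, right
   after it.  A saturation step duplicates the (at most two) nodes whose
   states it consumes, then performs one broadcast between the copies. *)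

Section Runs.

Variables (Q M : Type) (Delta : Q -> action M -> Q -> bool).

(* Runs are kept on the node set [nat], with the edges of a step reduced to
   the receivers of its sender; [reaches_rexec] turns them into executions. *)
Record bstep := BStep {
  sender : nat; msg : M; receivers : nat -> bool; post : nat -> Q }.

Definition bstep_ok (L : nat -> Q) (s : bstep) :=
  Delta (L (sender s)) (Bcast (msg s)) (post s (sender s)) /\
  forall w, w != sender s ->
    (receivers s w -> Delta (L w) (Recv (msg s)) (post s w)) /\
    (~~ receivers s w -> post s w = L w).

Fixpoint run_ok (L : nat -> Q) (ss : seq bstep) : Prop :=
  if ss is s :: ss' then bstep_ok L s /\ run_ok (post s) ss' else True.

Definition final (L : nat -> Q) (ss : seq bstep) := last L [seq post s | s <- ss].

Definition nbcast (w : nat) (ss : seq bstep) := count (fun s => sender s == w) ss.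

Definition upd (L : nat -> Q) (v : nat) (q : Q) : nat -> Q :=
  fun w => if w == v then q else L w.

Lemma upd_eq L v q : upd L v q v = q.
Proof. by rewrite /upd eqxx. Qed.

Lemma upd_neq L v q w : w != v -> upd L v q w = L w.
Proof. by rewrite /upd => /negbTE ->. Qed.

Lemma run_ok_cat L ss1 ss2 :
  run_ok L (ss1 ++ ss2) <-> run_ok L ss1 /\ run_ok (final L ss1) ss2.
Proof. by elim: ss1 L => [|s ss1 IH] L /=; rewrite ?IH; tauto. Qed.

Lemma final_cat L ss1 ss2 : final L (ss1 ++ ss2) = final (final L ss1) ss2.
Proof. by rewrite /final map_cat last_cat. Qed.

Lemma run_ok_drop L ss i : run_ok L ss -> i < size ss ->
  exists2 s, drop i ss = s :: drop i.+1 ss &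
    bstep_ok (final L (take i ss)) s /\ final L (take i.+1 ss) = post s.
Proof.
elim: ss L i => [|s ss IH] L [|i] //= [ok_s ok_ss] lt_i.
  by exists s; rewrite ?drop0 ?take0.
exact: IH.
Qed.

Lemma size_le_nbcast n k ss :
  all (fun s => sender s < n) ss -> (forall w, nbcast w ss <= k) ->
  size ss <= n * k.
Proof.
elim: n ss => [|n IH] ss senders_lt nbcast_le; first by case: ss senders_lt nbcast_le.
rewrite -(count_predC (fun s => sender s == n)) mulSn leq_add ?nbcast_le //.
rewrite -size_filter; apply: IH => [|w].
  by rewrite all_filter; apply: sub_all senders_lt => s /= ?; apply/implyP; lia.
rewrite /nbcast count_filter (leq_trans _ (nbcast_le w)) //.
by apply: sub_count => s /andP[].
Qed.

Lemma nbcast_eq0 n w ss : all (fun s => sender s < n) ss -> n <= w -> nbcast w ss = 0.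
Proof.
move=> + le_nw; rewrite /nbcast; elim: ss => //= s ss IH /andP[lt_s /IH ->].
by rewrite ltn_eqF // (leq_trans lt_s).
Qed.

(* Node [n] shadows node [u]; [L] is the labelling before the first step. *)
Fixpoint dup_run (u n : nat) (L : nat -> Q) (ss : seq bstep) : seq bstep :=
  if ss is s :: ss' then
    if sender s == u then
      BStep u (msg s) (fun w => (w != n) && receivers s w) (upd (post s) n (L u))
      :: BStep n (msg s) (fun _ => false) (upd (post s) n (post s u))
      :: dup_run u n (post s) ss'
    else
      BStep (sender s) (msg s) (fun w => receivers s (if w == n then u else w))
        (upd (post s) n (post s u))
      :: dup_run u n (post s) ss'
  else [::].

Lemma final_dup_run u n L ss :
  final (upd L n (L u)) (dup_run u n L ss) = upd (final L ss) n (final L ss u).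
Proof. by elim: ss L => [|s ss IH] L //=; case: ifP => _; apply: IH. Qed.

Lemma nbcast_dup_run u n L ss w :
  nbcast w (dup_run u n L ss) = nbcast w ss + (w == n) * nbcast u ss.
Proof.
rewrite /nbcast; elim: ss L => [|s ss IH] L /=; first by rewrite muln0.
by case: ifP => [/eqP ->|_] /=; rewrite IH ?[n == w]eq_sym; case: (w == n); lia.
Qed.

Lemma dup_run_senders u n L ss : u < n ->
  all (fun s => sender s < n) ss -> all (fun s => sender s < n.+1) (dup_run u n L ss).
Proof.
move=> lt_u; elim: ss L => [|s ss IH] L //= /andP[lt_s senders_lt].
by case: ifP => _ /=; rewrite IH // ?ltnSn andbT ?ltnS ?(ltnW lt_s) ?(ltnW lt_u).
Qed.

Lemma run_ok_dup_run u n L ss : all (fun s => sender s < n) ss ->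
  run_ok L ss -> run_ok (upd L n (L u)) (dup_run u n L ss).
Proof.
elim: ss L => [|s ss IH] L //= /andP[lt_s senders_lt] [[ok_b ok_r] ok_ss].
have ne_sn : sender s != n by rewrite neq_ltn lt_s.
case: ifP => [/eqP eq_su|ne_su] /=; rewrite /bstep_ok /=; last first.
  split; last exact: IH.
  rewrite !upd_neq //; split => // w ne_ws.
  have [->|ne_wn] := eqVneq w n; rewrite ?eqxx ?upd_eq ?upd_neq //; apply: ok_r => //.
  by rewrite eq_sym ne_su.
subst u; split; [|split; [|exact: IH]].
- rewrite !upd_neq //; split => // w ne_ws.
  have [->|ne_wn] := eqVneq w n; rewrite ?upd_eq ?upd_neq //=; exact: ok_r.
- by rewrite !upd_eq; split => // w ne_wn; rewrite !upd_neq.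
Qed.

End Runs.

Section Executions.

Variables (Q : finType) (M : Type) (I : {set Q}) (Delta : Q -> action M -> Q -> bool).

Definition reaches (n k : nat) (L : nat -> Q) :=
  exists L0 (ss : seq (bstep Q M)),
    [/\ forall w, w < n -> L0 w \in I, all (fun s => sender s < n) ss,
        run_ok Delta L0 ss, final L0 ss = L & forall w, nbcast w ss <= k].

Lemma reaches_init n k L : (forall w, w < n -> L w \in I) -> reaches n k L.
Proof. by move=> init_L; exists L, [::]. Qed.

Lemma reaches_dup n k L u : u < n -> reaches n k L -> reaches n.+1 k (upd L n (L u)).
Proof.
move=> lt_u [L0 [ss [init_L0 senders_lt ok_ss <- nbcast_le]]].
exists (upd L0 n (L0 u)), (dup_run u n L0 ss); split.
- move=> w lt_w; have [->|ne_wn] := eqVneq w n; first by rewrite upd_eq init_L0.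
  by rewrite upd_neq // init_L0 // ltn_neqAle ne_wn -ltnS.
- exact: dup_run_senders.
- exact: run_ok_dup_run.
- exact: final_dup_run.
- move=> w; rewrite nbcast_dup_run.
  have [->|_] := eqVneq w n; last by rewrite mul0n addn0.
  by rewrite (nbcast_eq0 senders_lt) // add0n mul1n.
Qed.

Lemma reaches_step n k L s : reaches n k L -> sender s < n -> bstep_ok Delta L s ->
  reaches n k.+1 (post s).
Proof.
move=> [L0 [ss [init_L0 senders_lt ok_ss final_ss nbcast_le]]] lt_s ok_s.
exists L0, (ss ++ [:: s]); split => //.
- by rewrite all_cat senders_lt /= lt_s.
- by apply/run_ok_cat; rewrite final_ss.
- by rewrite final_cat.
- by move=> w; rewrite /nbcast count_cat /= addn0 -addn1 leq_add ?nbcast_le ?leq_b1.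
Qed.

Lemma reaches_rexec n k L : reaches n k L ->
  exists r (gs : nat -> config Q n),
    [/\ rexec I Delta r gs, r <= n * k & forall v : 'I_n, lab (gs r) v = L v].
Proof.
case=> L0 [ss [init_L0 senders_lt ok_ss <- nbcast_le]].
pose link (s : bstep Q M) (x y : 'I_n) :=
  (x != y) && ((val x == sender s) && receivers s y || (val y == sender s) && receivers s x).
pose gs i := Config (fun x y => if ohead (drop i ss) is Some s then link s x y else false)
                    (fun v : 'I_n => final L0 (take i ss) v).
exists (size ss), gs; split; [|exact: size_le_nbcast|by move=> v; rewrite /= take_size].
split; [|split].
- move=> i _; split=> [x y|x] /=; case: ohead => // s.
    by rewrite /link eq_sym orbC.
  by rewrite /link eqxx.
- by move=> v; rewrite /= take0; apply: init_L0.
- move=> i lt_i; have [s drop_i [[ok_b ok_r] take_i]] := run_ok_drop ok_ss lt_i.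
  have lt_s : sender s < n.
    by move: senders_lt; rewrite -(cat_take_drop i ss) all_cat drop_i => /and3P[].
  exists (Ordinal lt_s), (msg s); rewrite /= drop_i take_i; split => // v ne_v.
  have ne_vs : val v != sender s by apply: contra ne_v => /eqP eq_v; apply/eqP/val_inj.
  by rewrite /link /= eq_sym ne_v eqxx (negbTE ne_vs) /= orbF; apply: ok_r.
Qed.

Definition realizable (S : {set Q}) :=
  exists n L, [/\ reaches n #|S| L, n <= 2 * #|S| &
                 forall q, q \in S -> exists2 w, w < n & L w = q].

Lemma realizable_init (q0 : Q) : realizable I.
Proof.
exists #|I|, (nth q0 (enum I)); split.
- by apply: reaches_init => w lt_w; rewrite -mem_enum mem_nth // -cardE.
- by rewrite leq_pmull.
- move=> q qI; exists (index q (enum I)); first by rewrite cardE index_mem mem_enum.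
  by rewrite nth_index // mem_enum.
Qed.

Lemma realizable_bcast S q1 m q2 : realizable S -> q1 \in S -> q2 \notin S ->
  Delta q1 (Bcast m) q2 -> realizable (q2 |: S).
Proof.
move=> [n [L [reach_L le_n cover_S]]] q1S q2S bcast_q.
have [w1 lt_w1 Lw1] := cover_S q1 q1S.
pose L1 := upd L n (L w1).
exists n.+1, (upd L1 n q2); rewrite cardsU1 q2S add1n; split.
- apply: (@reaches_step _ _ L1 (BStep n m (fun _ => false) (upd L1 n q2))) => //.
    exact: reaches_dup.
  split=> [|w ne_wn]; first by rewrite /= /L1 !upd_eq Lw1.
  by rewrite /= upd_neq.
- by rewrite mulnS ltnS (leq_trans le_n).
- move=> q; rewrite in_setU1 => /predU1P[->|qS]; first by exists n; rewrite ?upd_eq.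
  have [w lt_w <-] := cover_S q qS; exists w; first exact: ltnW.
  by rewrite /L1 !upd_neq // ltn_eqF.
Qed.

Lemma realizable_recv S q1 q2 q1' q2' m : realizable S ->
  q1 \in S -> q2 \in S -> q1' \in S -> q2' \notin S ->
  Delta q1 (Bcast m) q2 -> Delta q1' (Recv m) q2' -> realizable (q2' |: S).
Proof.
move=> [n [L [reach_L le_n cover_S]]] q1S _ q1'S q2'S bcast_q recv_q.
have [w1 lt_w1 Lw1] := cover_S q1 q1S; have [w1' lt_w1' Lw1'] := cover_S q1' q1'S.
pose L1 := upd L n (L w1); pose L2 := upd L1 n.+1 (L1 w1').
exists n.+2, (upd (upd L2 n q2) n.+1 q2'); rewrite cardsU1 q2'S add1n; split.
- apply: (@reaches_step _ _ L2 (BStep n m (pred1 n.+1) (upd (upd L2 n q2) n.+1 q2'))) => //.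
    by apply: reaches_dup; [rewrite ltnS ltnW | apply: reaches_dup].
  have ne_nn1 : n != n.+1 by rewrite ltn_eqF.
  split=> [|w ne_wn] /=.
    by rewrite /L2 /L1 !(upd_neq _ _ ne_nn1) !upd_eq Lw1.
  have [->|ne_wn1] := eqVneq w n.+1; last by rewrite !upd_neq.
  by rewrite /L2 /L1 !upd_eq upd_neq ?Lw1' // ltn_eqF.
- by rewrite mulnS !ltnS (leq_trans le_n).
- move=> q; rewrite in_setU1 => /predU1P[->|qS]; first by exists n.+1; rewrite ?upd_eq.
  have [w lt_w <-] := cover_S q qS; exists w; first by rewrite ltnW // ltnW.
  have ne_wn : w != n by rewrite ltn_eqF.
  have ne_wn1 : w != n.+1 by rewrite ltn_eqF // ltnW.
  by rewrite /L2 /L1 !upd_neq.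
Qed.

Lemma realizable_sat_run x y : sat_run Delta x y -> realizable x.1 -> realizable y.1.
Proof.
elim=> // {}x {}y z step_xy _ IH real_x; apply: IH.
case: x y / step_xy real_x => S c q.
  move=> [q1 [m [q1S qS bcast_q]]] real_S.
  exact: realizable_bcast real_S q1S qS bcast_q.
move=> _ [q1 [q2 [q1' [m [[q1S q2S q1'S qS] [bcast_q recv_q]]]]]] real_S.
exact: realizable_recv real_S q1S q2S q1'S qS bcast_q recv_q.
Qed.

End Executions.

Theorem theorem3p2 (Q M : finType) (I : {set Q})
    (Delta : Q -> action M -> Q -> bool)
    (Hcomplete : reception_complete Delta)
    (F S : {set Q}) :
  saturation_output I Delta S ->
  F :&: S != set0 ->
  exists (n r : nat) (gs : nat -> config Q n),
    [/\ rexec I Delta r gs, covers (gs r) F,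
        n <= 2 * #|Q| & r <= 2 * #|Q| ^ 2].
Proof.
move=> [c [run_S _]] /set0Pn[q /setIP[qF qS]].
have [n [L [reach_L le_n cover_S]]] := realizable_sat_run run_S (realizable_init I Delta q).
have [r [gs [exec_gs le_r lab_r]]] := reaches_rexec reach_L.
have [w lt_w Lw] := cover_S q qS.
have le_SQ : #|S| <= #|Q| := max_card S.
exists n, r, gs; split => //.
- by exists (Ordinal lt_w); rewrite lab_r Lw.
- by rewrite (leq_trans le_n) // leq_mul2l le_SQ orbT.
- rewrite (leq_trans le_r) // expnS expn1 mulnA.
  by rewrite leq_mul // (leq_trans le_n) // leq_mul2l le_SQ orbT.
Qed.
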